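(* Let $G$ be a Frobenius group with cyclic Frobenius kernel $N$ of order $p^a$ and cyclic Frobenius complement $C$ of order $q^m$, where $p,q$ are primes and $a,m\ge 1$. Then $G\in\mathcal{D}_{(a+1)m-1}$.
   Context: $\mathcal{D}(G)$ denotes the number of conjugacy classes of nontrivial subgroups $H$ of the finite group $G$ with $N_G(H)\neq H$; $\mathcal{D}_n$ is the family of finite groups $G$ with $\mathcal{D}(G)=n$. *)

From mathcomp Require Import all_boot all_fingroup all_solvable.
Set Implicit Arguments. Unset Strict Implicit. Unset Printing Implicit Defensive.
Local Open Scope group_scope.

Definition nonselfnorm_subgroups (gT : finGroupType) (G : {set gT}) : {set {set gT}} :=
  [set H : {set gT} | [&& group_set H, H \subset G, H != 1 & 'N_G(H) != H]].

Definition Dnum (gT : finGroupType) (G : {set gT}) : nat :=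
  #|[set H :^: G | H in nonselfnorm_subgroups G]|.

From mathcomp Require Import all_boot all_fingroup all_solvable.
Set Implicit Arguments. Unset Strict Implicit. Unset Printing Implicit Defensive.
Local Open Scope group_scope.

(* Every subgroup H of G = N ><| C is conjugate to a product X * Y with X <= N
   and Y <= C; as N and C are cyclic, X and Y, hence the conjugacy class of H,
   are determined by |H| = p^i q^j.  H is self-normalising exactly when j = m:
   for j < m a conjugate of C normalises H without lying in it, while for j = m
   a Sylow q-subgroup of H is a conjugate of the self-normalising C and the
   Frattini argument gives N_G(H) = H.  The classes counted by D(G) thus
   correspond to the pairs (i, j) <> (0, 0) with i <= a and j < m. *)

Lemma coprime_pfactor p q i j :
  prime p -> prime q -> p != q -> coprime (p ^ i) (q ^ j).
Proof.
by move=> p_pr q_pr neq_pq; rewrite coprimeXl ?coprimeXr ?prime_coprime ?dvdn_prime2.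
Qed.

Lemma pfactorMK p q i j :
  prime p -> prime q -> p != q -> logn p (p ^ i * q ^ j) = i.
Proof.
move=> p_pr q_pr neq_pq; rewrite mulnC logn_Gauss ?pfactorK //.
by rewrite coprime_sym (coprime_pfactor _ 1) // eq_sym.
Qed.

Lemma dvdn_pfactor2 p q i j d : prime p -> prime q -> p != q ->
  d %| p ^ i * q ^ j -> d = (p ^ logn p d * q ^ logn q d)%N.
Proof.
move=> p_pr q_pr neq_pq d_dv.
have d_gt0 : 0 < d by apply: dvdn_gt0 d_dv; rewrite muln_gt0 !expn_gt0 !prime_gt0.
rewrite -!p_part -{1}(partnC p d_gt0); congr (_ * _)%N.
apply: eq_in_partn => r; rewrite mem_primes => /and3P[r_pr _ /dvdn_trans/(_ d_dv)].
rewrite Euclid_dvdM // !Euclid_dvdX // !dvdn_prime2 // !inE.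
by case/orP=> /andP[/eqP-> _]; rewrite ?eqxx // ?(negPf neq_pq) // eq_sym.
Qed.

Lemma card_nonzero_pairs n1 n2 : 0 < n1 -> 0 < n2 ->
  #|[set ij : 'I_n1 * 'I_n2 | 0 < ij.1 + ij.2]| = (n1 * n2 - 1)%N.
Proof.
case: n1 n2 => [|n1] [|n2] // _ _.
have -> : [set ij : 'I_n1.+1 * 'I_n2.+1 | 0 < ij.1 + ij.2] = [set~ (ord0, ord0)].
  by apply/setP=> -[i j]; rewrite !inE xpair_eqE -!val_eqE addn_gt0 !lt0n negb_and.
by rewrite cardsC1 card_prod !card_ord subn1.
Qed.

Lemma card_repr_conjugates (gT : finGroupType) (G H : {group gT}) :
  #|repr (H :^: G)| = #|H|.
Proof.
have /mem_repr : H :^ 1 \in H :^: G by apply: imset_f.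
by case/imsetP=> x _ ->; apply: cardJg.
Qed.

Lemma mem_nonselfnormP (gT : finGroupType) (G : {group gT}) (A : {set gT}) :
  A \in nonselfnorm_subgroups G ->
  exists2 H : {group gT}, A = H & [/\ H \subset G, H :!=: 1 & 'N_G(H) != H].
Proof. by rewrite inE => /and4P[gA sAG ntA nA]; exists (Group gA). Qed.

Section CyclicSdprodPQ.

Variables (gT : finGroupType) (G N C : {group gT}) (p q a m : nat).
Hypotheses (p_pr : prime p) (q_pr : prime q) (neq_pq : p != q).
Hypotheses (defG : N ><| C = G) (cycN : cyclic N) (cycC : cyclic C).
Hypotheses (oN : #|N| = (p ^ a)%N) (oC : #|C| = (q ^ m)%N).
Hypothesis selfnormC : 'N_G(C) = C.

Let nsNG : N <| G. Proof. by case/sdprod_context: defG. Qed.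
Let sCG : C \subset G. Proof. by case/sdprod_context: defG. Qed.
Let oG : #|G| = (p ^ a * q ^ m)%N.
Proof. by rewrite -(sdprod_card defG) oN oC. Qed.

Lemma card_subgroup (H : {group gT}) : H \subset G ->
  #|H| = (p ^ logn p #|H| * q ^ logn q #|H|)%N.
Proof. by move/cardSg; rewrite oG; apply: dvdn_pfactor2. Qed.

Lemma logn_p_subgroup (H : {group gT}) : H \subset G -> logn p #|H| <= a.
Proof.
move=> sHG; rewrite -(pfactorMK a m p_pr q_pr neq_pq) -oG.
exact: dvdn_leq_log (cardG_gt0 G) (cardSg sHG).
Qed.

Lemma logn_q_subgroup (H : {group gT}) : H \subset G -> logn q #|H| <= m.
Proof.
move=> sHG; rewrite -(pfactorMK m a q_pr p_pr) 1?eq_sym // mulnC -oG.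
exact: dvdn_leq_log (cardG_gt0 G) (cardSg sHG).
Qed.

Lemma Hall_N : p.-Hall(G) N.
Proof. by rewrite pHallE (normal_sub nsNG) p_part oG pfactorMK // oN eqxx. Qed.

Lemma Sylow_C : q.-Sylow(G) C.
Proof. by rewrite pHallE sCG p_part oG mulnC pfactorMK 1?eq_sym // oC eqxx. Qed.

Lemma subN_normal (X : {group gT}) : X \subset N -> X <| G.
Proof. by rewrite -(sub_cyclic_char X cycN) => /char_normal_trans->. Qed.

Lemma subgroup_conj_mulNC (H : {group gT}) : H \subset G ->
  exists2 g, g \in G & exists X : {group gT}, exists2 Y : {group gT},
    [/\ X \subset N, #|X| = (p ^ logn p #|H|)%N,
        Y \subset C & #|Y| = (q ^ logn q #|H|)%N] & H :^ g = X * Y.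
Proof.
move=> sHG; have hallNH := setI_normal_Hall nsNG Hall_N sHG.
have [Q sylQ] := Sylow_exists q H; have [sQH qQ _] := and3P sylQ.
have [g Gg sQgC] := Sylow_Jsub Sylow_C (subset_trans sQH sHG) qQ.
have oNH : #|N :&: H| = (p ^ logn p #|H|)%N by rewrite (card_Hall hallNH) p_part.
have oQ : #|Q| = (q ^ logn q #|H|)%N by rewrite (card_Hall sylQ) p_part.
have defH : (N :&: H) * Q = H.
  apply/eqP; rewrite eqEcard mulG_subG subsetIr sQH /= TI_cardMg ?oNH ?oQ.
    by rewrite -card_subgroup.
  by rewrite coprime_TIg // oNH oQ coprime_pfactor.
exists g => //; exists ((N :&: H) :^ g)%G; exists (Q :^ g)%G.
  rewrite /= !cardJg oNH oQ -{2}(normsP (normal_norm nsNG) g Gg) conjSg subsetIl.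
  by split.
by rewrite -conjsMg defH.
Qed.

Lemma conj_subgroups_card (H K : {group gT}) :
  H \subset G -> K \subset G -> #|H| = #|K| -> exists2 g, g \in G & H :^ g = K.
Proof.
move=> sHG sKG oHK.
have [g Gg [X1 [Y1 [sX1N oX1 sY1C oY1] defH]]] := subgroup_conj_mulNC sHG.
have [h Gh [X2 [Y2 [sX2N oX2 sY2C oY2] defK]]] := subgroup_conj_mulNC sKG.
have /eqP eqX : X1 :==: X2 by rewrite (eq_subG_cyclic cycN) // oX1 oX2 oHK.
have /eqP eqY : Y1 :==: Y2 by rewrite (eq_subG_cyclic cycC) // oY1 oY2 oHK.
exists (g * h^-1); first by rewrite groupM ?groupV.
by rewrite conjsgM defH eqX eqY -defK conjsgK.
Qed.

Lemma selfnorm_subgroupE (H : {group gT}) : H \subset G ->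
  ('N_G(H) == H) = (logn q #|H| == m).
Proof.
move=> sHG; apply/eqP/eqP=> [selfnormH | lognH].
  apply/eqP; rewrite eqn_leq logn_q_subgroup //= -(pfactorK m q_pr) -oC.
  have [g Gg [X [Y [sXN _ sYC _] defH]]] := subgroup_conj_mulNC sHG.
  have nHgC : C \subset 'N(H :^ g).
    rewrite defH normsM //; last exact: sub_abelian_norm (cyclic_abelian cycC) sYC.
    exact: subset_trans sCG (normal_norm (subN_normal sXN)).
  have sCgH : C :^ g^-1 \subset H.
    by rewrite -selfnormH subsetI !sub_conjgV (conjGid Gg) sCG -normJ.
  by rewrite -(cardJg C g^-1) dvdn_leq_log ?cardSg.
have [Q sylQ] := Sylow_exists q H.
have sylQG : q.-Sylow(G) Q.
  rewrite pHallE (subset_trans (pHall_sub sylQ) sHG) (card_Hall sylQ) p_part.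
  by rewrite lognH -oC (card_Hall Sylow_C) p_part eqxx.
have selfnormQ : 'N_G(Q) = Q.
  have [y Gy ->] := Sylow_trans Sylow_C sylQG.
  by rewrite normJ -{1}(conjGid Gy) -conjIg selfnormC.
have <- := Frattini_arg (_ : H <| 'N_G(H)) sylQ; last by rewrite normal_subnorm.
apply/eqP; rewrite eqEsubset mulG_subG subxx mulg_subl ?group1 // andbT.
rewrite (subset_trans _ (pHall_sub sylQ)) // -{2}selfnormQ.
by rewrite setSI ?subsetIl.
Qed.

Lemma subgroup_of_logn i j : i <= a -> j <= m ->
  exists H : {group gT}, [/\ H \subset G, logn p #|H| = i & logn q #|H| = j].
Proof.
move=> le_ia le_jm.
have [Y [sYN _ oY]] : exists Y : {group gT}, [/\ Y \subset N, Y <| N & #|Y| = (p ^ i)%N].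
  by apply: normal_pgroup (pHall_pgroup Hall_N) (normal_refl N) _; rewrite oN pfactorK.
have [Z [sZC _ oZ]] : exists Z : {group gT}, [/\ Z \subset C, Z <| C & #|Z| = (q ^ j)%N].
  by apply: normal_pgroup (pHall_pgroup Sylow_C) (normal_refl C) _; rewrite oC pfactorK.
have nYZ : Z \subset 'N(Y).
  exact: subset_trans (subset_trans sZC sCG) (normal_norm (subN_normal sYN)).
have oYZ : #|Y <*> Z| = (p ^ i * q ^ j)%N.
  by rewrite norm_joinEr // TI_cardMg ?oY ?oZ // coprime_TIg // oY oZ coprime_pfactor.
exists (Y <*> Z)%G; rewrite oYZ pfactorMK // mulnC pfactorMK 1?eq_sym //.
by rewrite join_subG (subset_trans sYN (normal_sub nsNG)) (subset_trans sZC sCG).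
Qed.

Lemma trivg_logn (H : {group gT}) : H \subset G ->
  (H :==: 1) = (logn p #|H| + logn q #|H| == 0).
Proof.
move=> sHG; rewrite trivg_card1; apply/eqP/eqP=> [-> | ]; first by rewrite !logn1.
by move/eqP; rewrite addn_eq0 => /andP[/eqP pH /eqP qH]; rewrite card_subgroup // pH qH.
Qed.

Lemma mem_nonselfnorm_logn (H : {group gT}) : H \subset G ->
  (gval H \in nonselfnorm_subgroups G) =
    (0 < logn p #|H| + logn q #|H|) && (logn q #|H| < m).
Proof.
move=> sHG; rewrite inE groupP sHG trivg_logn // selfnorm_subgroupE // lt0n.
by rewrite ltn_neqAle logn_q_subgroup ?andbT.
Qed.

Lemma Dnum_logn_pairs : 0 < m ->
  Dnum G = #|[set ij : 'I_a.+1 * 'I_m | 0 < ij.1 + ij.2]|.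
Proof.
move=> m_gt0; pose classes := [set H :^: G | H in nonselfnorm_subgroups G].
(* The junk defaults of inord and insubd are never hit on the classes counted. *)
pose type (X : {set {set gT}}) : 'I_a.+1 * 'I_m :=
  (inord (logn p #|repr X|), insubd (Ordinal m_gt0) (logn q #|repr X|)).
have classesP X : X \in classes -> exists2 H : {group gT}, X = H :^: G &
    [/\ H \subset G, 0 < logn p #|H| + logn q #|H| & logn q #|H| < m].
  case/imsetP=> _ /[dup] /mem_nonselfnormP[H -> [sHG _ _]] S_H ->.
  by exists H => //; move: S_H; rewrite mem_nonselfnorm_logn // => /andP[].
have typeE (H : {group gT}) : H \subset G -> logn q #|H| < m ->
    (type (H :^: G)).1 = logn p #|H| :> nat /\
    (type (H :^: G)).2 = logn q #|H| :> nat.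
  move=> sHG lt_qm; rewrite /type card_repr_conjugates; split.
    by rewrite inordK // ltnS logn_p_subgroup.
  by rewrite val_insubd lt_qm.
have type_inj : {in classes &, injective type}.
  move=> X Y /classesP[H -> [sHG _ ltH]] /classesP[K -> [sKG _ ltK]] eq_type.
  have [pH qH] := typeE H sHG ltH; have [pK qK] := typeE K sKG ltK.
  have oHK : #|H| = #|K|.
    by rewrite card_subgroup // -pH -qH eq_type pK qK -card_subgroup.
  have [g Gg <-] := conj_subgroups_card sHG sKG oHK.
  by rewrite conjugates_conj lcoset_id.
rewrite /Dnum -/classes -(card_in_imset type_inj); apply: eq_card => -[i j].
rewrite [in RHS]inE /=; apply/imsetP/idP.
  case=> _ /classesP[H -> [sHG nzH ltH]] [-> ->].
  by have [-> ->] := typeE H sHG ltH.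
move=> nz_ij; have [H [sHG pH qH]] := subgroup_of_logn (ltn_ord i) (ltnW (ltn_ord j)).
have ltH : logn q #|H| < m by rewrite qH.
exists (H :^: G).
  by apply: imset_f; rewrite mem_nonselfnorm_logn // pH qH nz_ij ltn_ord.
case: (type _) (typeE H sHG ltH) => i' j' /= [pi' qj'].
by congr (_, _); apply: val_inj; rewrite /= ?pi' ?qj'.
Qed.

End CyclicSdprodPQ.

Lemma Frobenius_compl_selfnorm (gT : finGroupType) (G K H : {group gT}) :
  [Frobenius G = K ><| H] -> 'N_G(H) = H.
Proof.
by case/FrobeniusWcompl/andP=> _ /and3P[_ _ /eqP]; rewrite normD1.
Qed.

Theorem mainTheorem8 (gT : finGroupType) (G N C : {group gT}) (p q a m : nat) :
  prime p -> prime q -> 0 < a -> 0 < m ->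
  [Frobenius G = N ><| C] ->
  cyclic N -> #|N| = (p ^ a)%N ->
  cyclic C -> #|C| = (q ^ m)%N ->
  Dnum G = ((a + 1) * m - 1)%N.
Proof.
move=> p_pr q_pr a_gt0 m_gt0 frobG cycN oN cycC oC.
have [defG _ _ _ _] := Frobenius_context frobG.
have neq_pq : p != q.
  apply: contraTneq (Frobenius_coprime frobG) => eq_pq.
  by rewrite oN oC -eq_pq coprime_pexpl // coprime_pexpr // prime_coprime ?dvdnn.
rewrite (Dnum_logn_pairs p_pr q_pr neq_pq defG cycN cycC oN oC
           (Frobenius_compl_selfnorm frobG) m_gt0).
by rewrite card_nonzero_pairs // addn1.
Qed.
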